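(* Let $k\ge3$, let $G$ be a graph and $L$ a $k$-list assignment for $G$. Let $B$ be a bug in $G$ whose root $r$ has $d_G(r)\le 1$. Then $B$ is safe in $G$ if at least one of the following holds: $|V(B)|\ge2$; there is no edge between $V(B)$ and $V(G)\setminus V(B)$; $|V(G)|\not\equiv 0\pmod k$.
   Context: $V_{3^+}(G)$ is the set of vertices of degree at least $3$ in $G$. A bug in $G$ is an induced connected subgraph $B$ together with a vertex $r\in V(B)$, its root, such that $V(B)\cap V_{3^+}(G)\subseteq\{r\}$. A $k$-list assignment $L$ assigns to each vertex $v$ a set $L(v)$ of exactly $k$ colors; an $L$-coloring is a proper vertex coloring $f$ with $f(v)\in L(v)$. For an integer $n$ and $k\ge1$, $n\bmod^* k$ is the unique $m\in\{1,\dots,k\}$ with $n\equiv m\pmod k$. If $|V(G)|=n\ge 1$, an $L$-coloring $f$ of $G$ is strongly equitable (SE) if every color class has at most $\lceil n/k\rceil$ vertices and the number of colors whose class has exactly $\lceil n/k\rceil$ vertices (the full classes) is at most $n\bmod^* k$; the empty graph is regarded as SE $L$-colorable. A subgraph $S\subseteq G$ is safe in $G$ if every SE $L$-coloring of $G-V(S)$ (with the restriction of $L$) can be extended to an SE $L$-coloring of $G$. *)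

From mathcomp Require Import all_boot.
Set Implicit Arguments. Unset Strict Implicit. Unset Printing Implicit Defensive.

Definition simple_graph (T : finType) (e : rel T) : Prop :=
  symmetric e /\ irreflexive e.

Definition deg (T : finType) (e : rel T) (v : T) : nat := #|[set u | e v u]|.

Definition V3plus (T : finType) (e : rel T) : {set T} :=
  [set v | 3 <= deg e v].

(* the induced subgraph on B is connected (B nonempty is required separately) *)
Definition induced_connected (T : finType) (e : rel T) (B : {set T}) : Prop :=
  forall x y, x \in B -> y \in B ->
    connect [rel a b | [&& e a b, a \in B & b \in B]] x y.

Definition is_bug (T : finType) (e : rel T) (B : {set T}) (r : T) : Prop :=
  [/\ r \in B, induced_connected e B & B :&: V3plus e \subset [set r]].

Definition list_assignment (T C : finType) (k : nat) (L : T -> {set C}) : Prop :=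
  forall v, #|L v| = k.

Definition ceil_div (n k : nat) : nat := (n + k - 1) %/ k.

(* n mod* k : the unique m in {1..k} with n = m mod k *)
Definition modstar (n k : nat) : nat := if n %% k == 0 then k else n %% k.

(* f is an L-coloring of the induced subgraph G[U] (only values on U matter) *)
Definition L_coloring (T C : finType) (e : rel T) (L : T -> {set C})
  (U : {set T}) (f : T -> C) : Prop :=
  (forall v, v \in U -> f v \in L v) /\
  (forall u v, u \in U -> v \in U -> e u v -> f u != f v).

Definition color_class (T C : finType) (U : {set T}) (f : T -> C) (c : C) : {set T} :=
  [set v in U | f v == c].

(* strongly equitable L-coloring of G[U], with k the list size;
   the empty graph is regarded as SE L-colorable. *)
Definition SE_coloring (T C : finType) (e : rel T) (k : nat) (L : T -> {set C})
  (U : {set T}) (f : T -> C) : Prop :=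
  L_coloring e L U f /\
  (#|U| = 0 \/
   ((forall c, #|color_class U f c| <= ceil_div #|U| k) /\
    #|[set c | #|color_class U f c| == ceil_div #|U| k]| <= modstar #|U| k)).

Definition safe (T C : finType) (e : rel T) (k : nat) (L : T -> {set C})
  (S : {set T}) : Prop :=
  forall f : T -> C, SE_coloring e k L (~: S) f ->
    exists g : T -> C, SE_coloring e k L [set: T] g /\
      (forall v, v \in ~: S -> g v = f v).

From mathcomp Require Import all_boot zify.
Set Implicit Arguments. Unset Strict Implicit. Unset Printing Implicit Defensive.

(* Since every vertex of the bug B other than r has degree at most 2 and r has
   degree at most 1, B induces a path starting at r, and at most one edge leaves
   it, at its other end w.  Colour B greedily from w towards r.  Adding a vertex
   to an SE colouring of n vertices only forbids the n mod k full colours, so a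
   vertex with one coloured neighbour can be coloured unless n = -1 (mod k).  In
   that case its successor, which has no coloured neighbour, is coloured first;
   this makes the count divisible by k, and the vertex itself then only has to
   avoid its two neighbours.  The hypotheses exclude the one configuration in
   which no successor is left: B = {r} joined to G - B with |V(G)| = 0 (mod k). *)

Lemma ceil_divS n k : 0 < k -> ceil_div n.+1 k = ceil_div n k + (k %| n).
Proof.
move=> k_gt0; have nk_gt0 : 0 < n + k by rewrite addn_gt0 k_gt0 orbT.
rewrite /ceil_div addSn subSS subn1 -[n + k]prednK // divnS // prednK //.
by rewrite (dvdn_addl _ (dvdnn k)) addnC.
Qed.

Lemma leq_ceil_div m n k : m <= n -> ceil_div m k <= ceil_div n k.
Proof. by move=> le_mn; rewrite leq_div2r // leq_sub2r // leq_add2r. Qed.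

Lemma modstarS n k : 0 < k -> modstar n.+1 k = (n %% k).+1.
Proof.
move=> k_gt0; rewrite /modstar -addn1 -modnDml addn1.
by case: (ltngtP (n %% k).+1 k) (ltn_pmod n k_gt0) => [/modn_small -> // | // | -> _];
  rewrite modnn.
Qed.

Lemma modstar_mod n k : ~~ (k %| n) -> modstar n k = n %% k.
Proof. by rewrite /modstar /dvdn => /negbTE ->. Qed.

Lemma modnS_pred n k : 0 < k -> n %% k = k.-1 -> n.+1 %% k = 0.
Proof. by move=> k_gt0 n_mod; rewrite -addn1 -modnDml n_mod addn1 prednK // modnn. Qed.

Lemma modnS_neq_pred n k : 2 < k -> n %% k != k.-2 -> n.+1 %% k != k.-1.
Proof. by move=> k_gt2 n_mod; rewrite modnS; case: ifP => _; lia. Qed.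

Section Colorings.
Variables (T C : finType) (e : rel T) (k : nat) (L : T -> {set C}).
Hypotheses (e_sym : symmetric e) (e_irr : irreflexive e) (k_gt0 : 0 < k).

Definition class_has_room (U : {set T}) (f : T -> C) (c : C) : bool :=
  #|color_class U f c| < ceil_div #|U|.+1 k.

Lemma card_color_class_upd (U : {set T}) (f : T -> C) v c c' : v \notin U ->
  #|color_class (v |: U) [eta f with v |-> c] c'| = (c == c') + #|color_class U f c'|.
Proof.
move=> vNU; rewrite /color_class (cardsD1 v) !inE /= eqxx; congr (_ + _).
apply: eq_card => t; rewrite !inE /=; case: eqP => [-> | _] //=.
by rewrite (negbTE vNU).
Qed.

Lemma color_class_le_ceil (U : {set T}) (f : T -> C) c :
  SE_coloring e k L U f -> #|color_class U f c| <= ceil_div #|U| k.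
Proof.
case=> _ [U0 | [bound _]]; last exact: bound.
apply: (leq_trans _ (leq0n _)); rewrite -U0 subset_leq_card //.
by apply/subsetP => t; rewrite inE => /andP[].
Qed.

Lemma card_full_colors (U : {set T}) (f : T -> C) : SE_coloring e k L U f ->
  #|[set c | #|color_class U f c| == ceil_div #|U|.+1 k]| <= #|U| %% k.
Proof.
move=> fSE; rewrite ceil_divS //; case: (boolP (k %| #|U|)) => [/eqP-> | Ndvd_k].
  rewrite leqn0 cards_eq0; apply/eqP/setP => c; rewrite !inE addn1.
  by rewrite ltn_eqF // ltnS color_class_le_ceil.
case: fSE => _ [U0 | [_ full]]; first by rewrite U0 dvdn0 in Ndvd_k.
by rewrite addn0 -modstar_mod.
Qed.

Lemma exists_color_with_room (U : {set T}) (f : T -> C) (S : {set C}) :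
  SE_coloring e k L U f -> #|U| %% k < #|S| -> exists2 c, c \in S & class_has_room U f c.
Proof.
move=> fSE ltS.
have /subsetPn [c cS] : ~~ (S \subset [set c | #|color_class U f c| == ceil_div #|U|.+1 k]).
  apply: contra (@subset_leq_card _ _ _) _; rewrite -ltnNge.
  exact: leq_ltn_trans (card_full_colors fSE) ltS.
rewrite inE => cNfull; exists c => //; rewrite /class_has_room ltn_neqAle cNfull.
by rewrite (leq_trans (color_class_le_ceil _ fSE)) // leq_ceil_div.
Qed.

Lemma SE_coloring_extend (U : {set T}) (f : T -> C) v c :
  SE_coloring e k L U f -> v \notin U -> c \in L v ->
  (forall u, u \in U -> e v u -> f u != c) -> class_has_room U f c ->
  SE_coloring e k L (v |: U) [eta f with v |-> c].
Proof.
move=> fSE vNU cL nbrNc room; have [[fL f_proper] _] := fSE; split.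
  split=> [t | a b]; rewrite ?in_setU1 /=.
    by case: eqP => [-> // | _] /= tU; apply: fL.
  case: (eqVneq a v) => [-> | av]; case: (eqVneq b v) => [-> | bv] //=.
  - by rewrite e_irr.
  - by move=> _ bU evb; rewrite eq_sym; apply: nbrNc.
  - by move=> aU _ eav; apply: nbrNc; rewrite // e_sym.
  - exact: f_proper.
right; rewrite cardsU1 vNU add1n; split=> [c' | ].
  rewrite card_color_class_upd //; case: eqP => [<- // | _].
  by rewrite (leq_trans (color_class_le_ceil _ fSE)) // leq_ceil_div.
have sub_full :
    [set c' | #|color_class (v |: U) [eta f with v |-> c] c'| == ceil_div #|U|.+1 k]
    \subset c |: [set c' | #|color_class U f c'| == ceil_div #|U|.+1 k].
  apply/subsetP => c'; rewrite !inE card_color_class_upd //.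
  by case: (eqVneq c' c) => [-> | /negbTE]; rewrite ?eqxx // eq_sym => ->.
rewrite modstarS // (leq_trans (subset_leq_card sub_full)) // cardsU1.
exact: leq_add (leq_b1 _) (card_full_colors fSE).
Qed.

Lemma class_has_room_upd (U : {set T}) (f : T -> C) v c c' : v \notin U -> c != c' ->
  class_has_room U f c' -> class_has_room (v |: U) [eta f with v |-> c] c'.
Proof.
move=> vNU cc' room; rewrite /class_has_room card_color_class_upd // (negbTE cc').
by rewrite (leq_trans room) // leq_ceil_div // cardsU1 vNU.
Qed.

End Colorings.

Section Paths.
Variables (T : finType) (e : rel T).
Hypotheses (e_sym : symmetric e) (e_irr : irreflexive e).

Definition out_edge (W : {set T}) (u v : T) : bool := [&& u \in W, v \notin W & e u v].

Definition attached (W : {set T}) (w : T) : Prop :=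
  forall u v, out_edge W u v -> u = w.

(* [W] induces a path with end [w], and every edge leaving [W] starts at [w]. *)
Definition hanging_path (W : {set T}) (w : T) : Prop :=
  [/\ w \in W, induced_connected e W, {in W, forall v, deg e v <= 2},
      {in W &, forall a b, e w a -> e w b -> a = b} & attached W w].

Lemma nbr_eq_deg1 v a b : deg e v <= 1 -> e v a -> e v b -> a = b.
Proof.
move=> deg_v eva evb; apply/eqP; apply: contraTT deg_v => neq_ab.
by rewrite /deg (cardsD1 a) (cardsD1 b) !inE eva evb eq_sym neq_ab.
Qed.

Lemma nbr_eq_deg2 v z a b : deg e v <= 2 -> e v z -> e v a -> e v b ->
  a != z -> b != z -> a = b.
Proof.
move=> deg_v evz eva evb az bz; apply/eqP; apply: contraTT deg_v => neq_ab.
by rewrite /deg (cardsD1 z) (cardsD1 a) (cardsD1 b) !inE evz eva evb az bz eq_sym neq_ab.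
Qed.

Lemma induced_connected_nbr W w b : induced_connected e W -> w \in W -> b \in W -> b != w ->
  exists2 y, y \in W & e w y.
Proof.
move=> connW wW bW; have /connectP [[| y p] /= pW ->] := connW w b wW bW.
  by rewrite eqxx.
by case/andP: pW => /and3P [ewy _ yW] _ _; exists y.
Qed.

Lemma induced_connected_setD1 W w : induced_connected e W ->
  {in W &, forall a b, e w a -> e w b -> a = b} -> induced_connected e (W :\ w).
Proof.
move=> connW w_leaf x y; rewrite !in_setD1 => /andP [xw xW] /andP [yw yW].
have /connectP [p pW y_last] := connW x y xW yW; rewrite {y yW}y_last in yw *.
case: (shortenP pW) yw => q qW q_uniq _ {p pW} yw.
have allW : all (fun a => a \in W) (x :: q).
  rewrite /= xW; elim: q x qW {q_uniq yw xw xW} => //= a q IHq x /andP [/and3P [_ _ aW] aq].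
  by rewrite aW (IHq a aq).
have wNq : w \notin x :: q.
  rewrite inE negb_or eq_sym xw /=; apply/negP => wq.
  move: qW q_uniq yw; case/splitPr: wq => q1 [| a q2]; first by rewrite last_cat eqxx.
  rewrite cat_path => /andP [_ /andP [/and3P [e_lw lW _] /andP [/and3P [ewa _ aW] _]]] q_uniq _.
  have a_last : a = last x q1 by apply: w_leaf => //; rewrite e_sym.
  move: q_uniq; rewrite -cat_cons cat_uniq => /and3P [_ /hasP []].
  by exists a; [rewrite !inE eqxx !orbT | rewrite a_last mem_last].
apply/connectP; exists q => //; apply: (sub_in_path (P := mem (W :\ w))) qW.
  by move=> a b aW' bW' /and3P [eab _ _]; rewrite /= eab aW' bW'.
apply/allP => a aq; rewrite [_ a]in_setD1 (allP allW _ aq) andbT.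
by apply: contraNneq wNq => <-.
Qed.

(* Induction peeling off the root [r]; [z] is the previously peeled vertex. *)
Lemma out_edge_uniq_avoiding W r z : induced_connected e W -> r \in W ->
  {in W, forall v, deg e v <= 2} -> z \notin W :\ r ->
  (forall a b, e r a -> e r b -> a != z -> b != z -> a = b) ->
  forall u1 v1 u2 v2, out_edge W u1 v1 -> out_edge W u2 v2 -> v1 != z -> v2 != z ->
  (u1, v1) = (u2, v2).
Proof.
have [n] := ubnP #|W|; elim: n => // n IHn in W r z *.
rewrite ltnS => leWn connW rW degW zNW r_nbr u1 v1 u2 v2 o1 o2 v1z v2z.
have nbrW a : a \in W -> e r a -> a \in W :\ r.
  by move=> aW era; rewrite in_setD1 aW andbT; apply: contraTneq era => ->; rewrite e_irr.
case: (pickP [pred y | (y \in W) && e r y]) => [y /andP [yW ery] | r_alone]; last first.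
  have W_r b : b \in W -> b = r.
    move=> bW; apply/eqP; apply: contraT => br.
    have [y yW ery] := induced_connected_nbr connW rW bW br.
    by have := r_alone y; rewrite /= yW ery.
  case/and3P: o1 => /W_r -> _ erv1; case/and3P: o2 => /W_r -> _ erv2.
  by rewrite (r_nbr v1 v2).
have nbrNz a : a \in W -> e r a -> a != z.
  by move=> aW era; apply: contraNneq zNW => <-; apply: nbrW.
have out_setD1 u v : out_edge W u v -> v != z -> out_edge (W :\ r) u v.
  case/and3P => uW vNW euv vz; rewrite /out_edge !in_setD1 uW (negbTE vNW) euv andbF !andbT.
  by apply: contraNneq vNW => ur; rewrite -(r_nbr y v) // -?ur ?nbrNz.
have vNr v : v \notin W -> v != r by apply: contraNneq => ->.
apply: (IHn (W :\ r) y r) => //; rewrite ?out_setD1 ?vNr ?nbrW //.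
- by apply: leq_trans leWn; rewrite (cardsD1 r W) rW.
- apply: induced_connected_setD1 => // a b aW bW era erb.
  by apply: r_nbr; rewrite ?nbrNz.
- by move=> v /setD1P [_ /degW].
- by rewrite !in_setD1 eqxx andbF.
- by move=> a b; apply: nbr_eq_deg2; rewrite ?degW // e_sym.
- by case/and3P: o1.
- by case/and3P: o2.
Qed.

Lemma out_edge_uniq W r : induced_connected e W -> r \in W ->
  {in W, forall v, deg e v <= 2} -> deg e r <= 1 ->
  forall u1 v1 u2 v2, out_edge W u1 v1 -> out_edge W u2 v2 -> (u1, v1) = (u2, v2).
Proof.
move=> connW rW degW deg_r u1 v1 u2 v2 o1 o2.
have vNr v : v \notin W -> v != r by apply: contraNneq => ->.
apply: (out_edge_uniq_avoiding connW rW degW (z := r)) => //.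
- by rewrite setD11.
- by move=> a b era erb _ _; apply: nbr_eq_deg1 era erb.
- by case/and3P: o1 => _ /vNr.
- by case/and3P: o2 => _ /vNr.
Qed.

Lemma out_edge_setD1 W y u v : out_edge (W :\ y) u v -> v = y \/ out_edge W u v.
Proof.
case/and3P => /setD1P [_ uW] vNW' euv; case: (eqVneq v y) => [-> | vy]; first by left.
by right; rewrite /out_edge uW euv andbT; move: vNW'; rewrite in_setD1 vy.
Qed.

Lemma attached_setD1 W w u v : attached W w -> out_edge (W :\ w) u v -> v = w.
Proof.
move=> attW ouv; case: (out_edge_setD1 ouv) => // /attW uw.
by case/and3P: ouv; rewrite uw setD11.
Qed.

Lemma hanging_path_nbr W w : hanging_path W w -> W :\ w != set0 ->
  exists2 y, y \in W :\ w & e w y.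
Proof.
case=> wW connW _ _ _ /set0Pn [b /setD1P [bw bW]].
have [y yW ewy] := induced_connected_nbr connW wW bW bw.
by exists y; rewrite // in_setD1 yW andbT; apply: contraTneq ewy => ->; rewrite e_irr.
Qed.

Lemma hanging_path_setD1 W w y : hanging_path W w -> y \in W :\ w -> e w y ->
  hanging_path (W :\ w) y.
Proof.
case=> wW connW degW w_nbr attW yW' ewy; have [yw yW] := setD1P yW'.
have eyw : e y w by rewrite e_sym.
split=> //; first exact: induced_connected_setD1.
- by move=> v /setD1P [_ /degW].
- move=> a b /setD1P [aw _] /setD1P [bw _] eya eyb.
  exact: nbr_eq_deg2 (degW y yW) eyw eya eyb aw bw.
- move=> u v ouv; have vw := attached_setD1 attW ouv; subst v.
  by case/and3P: ouv => /setD1P [_ uW] _ euw; apply: w_nbr; rewrite // e_sym.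
Qed.

Lemma bug_deg_le2 B r : is_bug e B r -> deg e r <= 2 -> {in B, forall v, deg e v <= 2}.
Proof.
case=> _ _ sub_r deg_r v vB; case: (eqVneq v r) => [-> // | vr].
rewrite leqNgt; apply: contraNN vr => deg_v.
have /(subsetP sub_r) : v \in B :&: V3plus e by rewrite !inE vB deg_v.
by rewrite inE.
Qed.

Lemma bug_hanging_at_out_edge B r w x : is_bug e B r -> deg e r <= 1 -> out_edge B w x ->
  hanging_path B w /\ (forall v, out_edge B w v -> v = x).
Proof.
move=> Bbug deg_r owx; have [rB connB _] := Bbug.
have degB := bug_deg_le2 Bbug (leqW deg_r).
have out_wx u v : out_edge B u v -> u = w /\ v = x.
  by move=> ouv; case: (out_edge_uniq connB rB degB deg_r ouv owx) => -> ->.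
have [wB xNB ewx] := and3P owx.
split=> [| v /out_wx [] //]; split=> // [a b aB bB ewa ewb | u v /out_wx [] //].
have Nx c : c \in B -> c != x by apply: contraTneq => ->.
by apply: (nbr_eq_deg2 (degB w wB) ewx ewa ewb); rewrite Nx.
Qed.

Lemma bug_hanging_at_root B r : is_bug e B r -> deg e r <= 1 ->
  (forall u v, ~~ out_edge B u v) -> hanging_path B r.
Proof.
move=> Bbug deg_r no_out; have [rB connB _] := Bbug.
split=> // [| a b _ _ era erb | u v ouv]; first exact: bug_deg_le2 Bbug (leqW deg_r).
  exact: nbr_eq_deg1 deg_r era erb.
by have := no_out u v; rewrite ouv.
Qed.

End Paths.

Section HangingPathColoring.
Variables (T C : finType) (e : rel T) (k : nat) (L : T -> {set C}).
Hypotheses (e_sym : symmetric e) (e_irr : irreflexive e).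
Hypotheses (k_ge3 : 3 <= k) (L_card : list_assignment k L).

Let k_gt0 : 0 < k. Proof. exact: leq_trans k_ge3. Qed.

Definition SE_extensible (W : {set T}) (f : T -> C) : Prop :=
  exists g, SE_coloring e k L [set: T] g /\ {in ~: W, g =1 f}.

Lemma SE_extensible0 (W : {set T}) (f : T -> C) :
  W = set0 -> SE_coloring e k L (~: W) f -> SE_extensible W f.
Proof. by move=> ->; rewrite setC0 => fSE; exists f. Qed.

Lemma SE_extensible_sub (W V : {set T}) (f g : T -> C) :
  V \subset W -> {in ~: W, g =1 f} -> SE_extensible V g -> SE_extensible W f.
Proof.
move=> subVW gf [h [hSE hg]]; exists h; split=> // u uNW.
by rewrite hg ?gf //; move: uNW; rewrite !inE; apply: contra => /(subsetP subVW).
Qed.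

Lemma eta_with_notin (W : {set T}) (f : T -> C) v c :
  v \in W -> {in ~: W, [eta f with v |-> c] =1 f}.
Proof. by move=> vW u uNW /=; case: eqP uNW => // ->; rewrite inE vW. Qed.

Lemma SE_extensible_upd (W : {set T}) (f : T -> C) v c : v \in W ->
  SE_extensible (W :\ v) [eta f with v |-> c] -> SE_extensible W f.
Proof. by move=> vW; apply: (SE_extensible_sub (subD1set W v) (eta_with_notin _ c vW)). Qed.

Lemma card_setCD1 (W : {set T}) w : w \in W -> #|~: (W :\ w)| = #|~: W|.+1.
Proof. by move=> wW; rewrite setCD setUC cardsU1 inE wW. Qed.

Lemma card_list_setD1 v a : k.-1 <= #|L v :\ a|.
Proof. by have := cardsD1 a (L v); rewrite L_card; case: (_ \in _) => /=; lia. Qed.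

Lemma card_list_setD2 v a b : k.-2 <= #|L v :\ a :\ b|.
Proof.
have := cardsD1 b (L v :\ a); have := card_list_setD1 v a.
by case: (_ \in _) => /=; lia.
Qed.

Lemma SE_coloring_extend_compl (W : {set T}) (f : T -> C) v c :
  SE_coloring e k L (~: W) f -> v \in W -> c \in L v ->
  (forall u, out_edge e W v u -> f u != c) -> class_has_room k (~: W) f c ->
  SE_coloring e k L (~: (W :\ v)) [eta f with v |-> c].
Proof.
move=> fSE vW cL out_c room; rewrite setCD setUC; apply: SE_coloring_extend => //.
- by rewrite inE vW.
- by move=> u uNW evu; apply: out_c; rewrite /out_edge vW evu -in_setC uNW.
Qed.

Lemma SE_coloring_extend_avoiding (W : {set T}) (f : T -> C) v (S : {set C}) :
  SE_coloring e k L (~: W) f -> v \in W -> S \subset L v ->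
  (forall u, out_edge e W v u -> f u \notin S) -> #|~: W| %% k < #|S| ->
  exists2 c, c \in S & SE_coloring e k L (~: (W :\ v)) [eta f with v |-> c].
Proof.
move=> fSE vW sub_S out_S ltS; have [c cS room] := exists_color_with_room k_gt0 fSE ltS.
exists c => //; apply: SE_coloring_extend_compl => //; first exact: (subsetP sub_S).
by move=> u /out_S; apply: contraNneq => ->.
Qed.

Lemma SE_extensible_last (W : {set T}) (f : T -> C) v (S : {set C}) :
  W :\ v = set0 -> SE_coloring e k L (~: W) f -> v \in W -> S \subset L v ->
  (forall u, out_edge e W v u -> f u \notin S) -> #|~: W| %% k < #|S| ->
  SE_extensible W f.
Proof.
move=> W'0 fSE vW sub_S out_S ltS.
have [c _ f1SE] := SE_coloring_extend_avoiding fSE vW sub_S out_S ltS.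
exact: SE_extensible_upd vW (SE_extensible0 W'0 f1SE).
Qed.

(* Greedily, [y] could face [k - 1] full colours besides the colour of [w].
   Choosing both colours with room in [f] avoids this: the only colour that
   [w] can make full is its own. *)
Lemma SE_extensible_pair (W : {set T}) (f : T -> C) w y a0 :
  hanging_path e W w -> y \in W :\ w -> W :\ w :\ y = set0 ->
  SE_coloring e k L (~: W) f -> (forall v, out_edge e W w v -> f v = a0) ->
  #|~: W| %% k = k.-2 -> SE_extensible W f.
Proof.
move=> [wW _ _ _ attW] yW' W0 fSE w_out n_mod.
have n_lt : #|~: W| %% k < k.-1 by lia.
have [a /setD1P [aa0 aL] a_room] :=
  exists_color_with_room k_gt0 fSE (leq_trans n_lt (card_list_setD1 w a0)).
have [b /setD1P [ba bL] b_room] :=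
  exists_color_with_room k_gt0 fSE (leq_trans n_lt (card_list_setD1 y a)).
have f1SE : SE_coloring e k L (~: (W :\ w)) [eta f with w |-> a].
  by apply: SE_coloring_extend_compl => // u /w_out ->; rewrite eq_sym.
apply: (SE_extensible_upd wW); apply: (SE_extensible_upd yW').
apply: SE_extensible0 W0 _; apply: SE_coloring_extend_compl f1SE yW' bL _ _.
  by move=> u /(attached_setD1 attW) ->; rewrite /= eqxx eq_sym.
by rewrite setCD setUC; apply: class_has_room_upd; rewrite // ?inE ?wW // eq_sym.
Qed.

(* With [#|~: W| = -1 (mod k)] all [k - 1] colours of [L w :\ a0] might be full,
   so [y], which has no coloured neighbour, is coloured first. *)
Lemma SE_coloring_extend_two (W : {set T}) (f : T -> C) w y a0 :
  hanging_path e W w -> y \in W :\ w ->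
  SE_coloring e k L (~: W) f -> (forall v, out_edge e W w v -> f v = a0) ->
  #|~: W| %% k = k.-1 ->
  exists g, SE_coloring e k L (~: (W :\ w :\ y)) g /\ {in ~: W, g =1 f}.
Proof.
move=> [wW _ _ _ attW] yW' fSE w_out n_mod; have [yw yW] := setD1P yW'.
have y_out u : out_edge e W y u -> f u \notin L y by move/attW/eqP; rewrite (negbTE yw).
have [b _ f1SE] : exists2 b, b \in L y &
    SE_coloring e k L (~: (W :\ y)) [eta f with y |-> b].
  by apply: SE_coloring_extend_avoiding; rewrite ?n_mod ?L_card ?ltn_predL.
have wW' : w \in W :\ y by rewrite in_setD1 eq_sym yw.
have n1_mod : #|~: (W :\ y)| %% k = 0 by rewrite card_setCD1 // modnS_pred.
have w_out1 u : out_edge e (W :\ y) w u -> [eta f with y |-> b] u \notin L w :\ a0 :\ b.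
  case/out_edge_setD1 => [-> | owu]; first by rewrite /= eqxx !inE eqxx.
  have uy : u != y by apply: contraTneq owu => ->; rewrite /out_edge yW andbF.
  by rewrite /= (negbTE uy) w_out // !inE eqxx andbF.
have n1_lt : #|~: (W :\ y)| %% k < #|L w :\ a0 :\ b|.
  by rewrite n1_mod (leq_trans _ (card_list_setD2 w a0 b)) //; lia.
have [c _ f2SE] := SE_coloring_extend_avoiding f1SE wW'
  (subset_trans (subsetDl _ _) (subsetDl _ _)) w_out1 n1_lt.
exists [eta [eta f with y |-> b] with w |-> c]; split.
  by rewrite [W :\ w :\ y]setDDl setUC -setDDl.
by move=> u uNW; rewrite (eta_with_notin _ _ wW uNW) (eta_with_notin _ _ yW uNW).
Qed.

Lemma hanging_path_SE_extensible (W : {set T}) (f : T -> C) w a0 :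
  hanging_path e W w -> SE_coloring e k L (~: W) f ->
  (forall v, out_edge e W w v -> f v = a0) ->
  1 < #|W| \/ #|~: W| %% k != k.-1 -> SE_extensible W f.
Proof.
have [n] := ubnP #|W|; elim: n => // n IHn in W f w a0 *.
rewrite ltnS => leWn Wpath fSE w_out cond; have [wW _ _ _ attW] := Wpath.
have w_outS u : out_edge e W w u -> f u \notin L w :\ a0.
  by move/w_out->; rewrite !inE eqxx.
have room_w : #|~: W| %% k != k.-1 -> #|~: W| %% k < #|L w :\ a0|.
  move=> n_mod; rewrite (leq_trans _ (card_list_setD1 w a0)) //.
  by have := ltn_pmod #|~: W| k_gt0; lia.
have [W'0 | /(hanging_path_nbr e_irr Wpath) [y yW' ewy]] := eqVneq (W :\ w) set0.
  apply: (SE_extensible_last W'0 fSE wW (subsetDl _ _) w_outS); apply: room_w.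
  by case: cond => //; rewrite (cardsD1 w) wW W'0 cards0.
have [yw yW] := setD1P yW'; have ypath := hanging_path_setD1 e_sym Wpath yW' ewy.
have card_rec (V : {set T}) : V \subset W :\ w -> #|V| < n.
  by move=> /subset_leq_card le_V; apply: leq_trans leWn; rewrite (cardsD1 w W) wW add1n ltnS.
have [n_mod | n_mod] := eqVneq (#|~: W| %% k) k.-1.
  have [g [gSE gf]] := SE_coloring_extend_two Wpath yW' fSE w_out n_mod.
  apply: (SE_extensible_sub (subset_trans (subD1set _ _) (subD1set _ _)) gf).
  have [W0 | /(hanging_path_nbr e_irr ypath) [z zW'' eyz]] := eqVneq (W :\ w :\ y) set0.
    exact: SE_extensible0 W0 gSE.
  apply: (IHn _ _ z (g y) _ (hanging_path_setD1 e_sym ypath zW'' eyz)) => //.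
  - exact/card_rec/subD1set.
  - by case: ypath => _ _ _ _ atty v /(attached_setD1 atty) ->.
  - right; rewrite card_setCD1 // card_setCD1 // modnS_neq_pred // modnS_pred //.
    by lia.
have [pair | Npair] := boolP ((W :\ w :\ y == set0) && (#|~: W| %% k == k.-2)).
  case/andP: pair => /eqP W0 /eqP n_mod2.
  exact: (SE_extensible_pair Wpath yW' W0 fSE w_out n_mod2).
have [c _ f1SE] := SE_coloring_extend_avoiding fSE wW (subsetDl _ _) w_outS (room_w n_mod).
apply: (@SE_extensible_upd _ _ w c wW); apply: (IHn _ _ y c _ ypath) => //.
- exact: card_rec.
- by move=> v /(attached_setD1 attW) ->; rewrite /= eqxx.
- case: (ltnP 1 #|W :\ w|) => [| le1]; [by left | right].
  rewrite card_setCD1 // modnS_neq_pred //; apply: contraNneq Npair => n_mod2.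
  by move: le1; rewrite n_mod2 eqxx andbT (cardsD1 y) yW' add1n ltnS leqn0 cards_eq0.
Qed.

End HangingPathColoring.

Theorem corollary4p4 (T C : finType) (e : rel T) (k : nat) (L : T -> {set C})
  (B : {set T}) (r : T) :
  simple_graph e -> 3 <= k -> list_assignment k L ->
  is_bug e B r -> deg e r <= 1 ->
  (2 <= #|B| \/
   (forall u v, u \in B -> v \notin B -> ~~ e u v) \/
   ~~ (k %| #|T|)) ->
  safe e k L B.
Proof.
move=> [e_sym e_irr] k_ge3 L_card Bbug deg_r cases f fSE; have [rB _ _] := Bbug.
change (SE_extensible e k L B f).
case: (pickP [pred p : T * T | out_edge e B p.1 p.2]) => [[w x] /= owx | no_out].
  have [Bpath x_only] := bug_hanging_at_out_edge e_sym e_irr Bbug deg_r owx.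
  apply: (hanging_path_SE_extensible e_sym e_irr k_ge3 L_card (a0 := f x) Bpath fSE).
    by move=> v /x_only ->.
  case: (ltnP 1 #|B|) => [| leB1]; [by left | right].
  have B1 : #|B| = 1 by apply/eqP; rewrite eqn_leq leB1 card_gt0; apply/set0Pn; exists r.
  case: cases => [| [no_edge | Ndvd]]; first by rewrite B1.
    by case/and3P: owx => wB xNB; rewrite (negbTE (no_edge w x wB xNB)).
  by apply: contraNneq Ndvd => n_mod; rewrite -(cardsC B) B1 /dvdn add1n modnS_pred //; lia.
have no_out_B u v : ~~ out_edge e B u v by apply/negbT; exact: (no_out (u, v)).
have r_out u : out_edge e B r u -> f u \notin L r by rewrite (negbTE (no_out_B r u)).
case: (ltnP 1 #|B|) => [B2 | leB1].
  (* no edge leaves B, so the colour [a0] that [r] has to avoid is arbitrary *)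
  apply: (hanging_path_SE_extensible e_sym e_irr k_ge3 L_card (a0 := f r)
    (bug_hanging_at_root Bbug deg_r no_out_B) fSE); last by left.
  by move=> v; rewrite (negbTE (no_out_B r v)).
have B'0 : B :\ r = set0.
  by apply/eqP; move: leB1; rewrite (cardsD1 r B) rB add1n ltnS leqn0 cards_eq0.
apply: (SE_extensible_last e_sym e_irr k_ge3 B'0 fSE rB (subxx (L r)) r_out).
by rewrite L_card ltn_mod; lia.
Qed.
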